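(* Let $f\in\{0,1\}^n$ have a $2$-tilde-error overlap of shift $r$ with error positions $i<j$ and operations $O_i,O_j$. Then the word $\tilde\alpha_r(f)=\mathrm{pre}_r(f)\,O_i(f)$ is $f$-free.
   Context: Words are over $\{0,1\}$. For $w$ of length $n$: $w[k]$ is its $k$-th symbol, $\mathrm{pre}_l(w)=w[1..l]$ and $\mathrm{suf}_l(w)=w[n-l+1..n]$. A word is $f$-free if it does not contain $f$ as a factor. Operations: the replacement $R_i$ flips the symbol at position $i$. The swap $S_i$ is defined when $w[i]\ne w[i+1]$ and exchanges these two symbols. $\mathrm{dist}_\sim(u,v)$ is the minimum number of replacements and swaps transforming $u$ into the equal-length word $v$. A tilde-transformation is minimal if it uses exactly $\mathrm{dist}_\sim$ operations and modifies each position at most once. $f$ has a $2$-tilde-error overlap of length $l=n-r$ (with $1\le l\le n-1$; $r$ is the shift) if $\mathrm{dist}_\sim(\mathrm{pre}_l(f),\mathrm{suf}_l(f))=2$. In that case fix a minimal tilde-transformation from $\mathrm{pre}_l(f)$ to $\mathrm{suf}_l(f)$. It consists of two operations $O_i\in\{R_i,S_i\}$ and $O_j\in\{R_j,S_j\}$ acting at positions $i<j$ (the error positions). Since positions $1..l$ of $\mathrm{pre}_l(f)$ are positions of $f$, the words $O_i(f)$ and $O_j(f)$ are defined by applying the same operations to $f$. The overlap has type RR, SR, RS or SS according to whether $(O_i,O_j)$ is (replacement, replacement), (swap, replacement), (replacement, swap) or (swap, swap). *)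

(* Binary words are [seq bool]; positions are 0-indexed
   internally (paper position k corresponds to index k-1). *)
From mathcomp Require Import all_boot.
Set Implicit Arguments. Unset Strict Implicit. Unset Printing Implicit Defensive.

Inductive op := Rep of nat | Swp of nat.

Definition op_pos (o : op) : nat := match o with Rep i => i | Swp i => i end.

Definition op_support (o : op) : seq nat :=
  match o with Rep i => [:: i] | Swp i => [:: i; i.+1] end.

Definition apply_op (o : op) (w : seq bool) : option (seq bool) :=
  match o with
  | Rep i => if i < size w then Some (set_nth false w i (~~ nth false w i)) else None
  | Swp i =>
      if (i.+1 < size w) && (nth false w i != nth false w i.+1)
      then Some (set_nth false (set_nth false w i (nth false w i.+1)) i.+1 (nth false w i))
      else None
  end.

Fixpoint apply_ops (os : seq op) (w : seq bool) : option (seq bool) :=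
  match os with
  | [::] => Some w
  | o :: os' => obind (apply_ops os') (apply_op o w)
  end.

Definition transforms (os : seq op) (u v : seq bool) : Prop := apply_ops os u = Some v.

Definition tdist (u v : seq bool) (d : nat) : Prop :=
  size u = size v /\
  (exists os, size os = d /\ transforms os u v) /\
  (forall os, transforms os u v -> d <= size os).

Definition minimal_tt (os : seq op) (u v : seq bool) : Prop :=
  transforms os u v /\ tdist u v (size os) /\ uniq (flatten (map op_support os)).

Definition pre (l : nat) (w : seq bool) := take l w.
Definition suf (l : nat) (w : seq bool) := drop (size w - l) w.

Definition ffree (f w : seq bool) : bool := ~~ infix f w.

Definition two_tilde_overlap (f : seq bool) (r : nat) : Prop :=
  let l := size f - r in
  1 <= l <= size f - 1 /\ r <= size f /\ tdist (pre l f) (suf l f) 2.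

From mathcomp Require Import all_boot.
From mathcomp Require Import zify.

Set Implicit Arguments.
Unset Strict Implicit.
Unset Printing Implicit Defensive.

(* Every defined operation flips exactly the symbols at its
   support ([i] for a replacement, [i] and [i+1] for a swap).  Hence a
   tilde-transformation modifying each position at most once turns
   pre_l(f) into suf_l(f) by flipping the positions of its support, so
   f[r+t] = f[t] xor [t in S_i ++ S_j] for t < l, where S_i, S_j are the
   supports of O_i, O_j; disjointness and i < j put S_i entirely before the
   position j of O_j and S_j from j on.  O_i is defined on f because it is
   defined on pre_l(f) (directly, or after the disjoint O_j).
   The word pre_r(f) O_i(f) has length r + n, so an occurrence of f sits at
   an offset p <= r.  At p = r it would equal O_i(f) <> f.  For p < r,
   comparing f[j] with f[j+r] through the occurrence (and through the
   overlap at p + j - r when p + j >= r) contradicts the error at j. *)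

Lemma apply_op_flip (o : op) (w v : seq bool) : apply_op o w = Some v ->
  [/\ size v = size w, {in op_support o, forall k, k < size w} &
      forall k, nth false v k = nth false w k (+) (k \in op_support o)].
Proof.
case: o => i /=.
- case: ifP => // lt_i [<-]; split=> [|k|k]; rewrite ?inE.
  + by rewrite size_set_nth; apply/maxn_idPr.
  + by move/eqP->.
  + by rewrite nth_set_nth /=; case: eqP => [->|]; rewrite ?addbT ?addbF.
- case: ifP => // /andP[lt_i1 neq_i] [<-]; split=> [|k|k]; rewrite ?inE.
  + by rewrite !size_set_nth; lia.
  + by case/orP=> /eqP->; lia.
  + rewrite !nth_set_nth /=.
    have [->|ne1] := eqVneq k i.+1.
      by rewrite orbT addbT; case: (nth false w i) neq_i; case: (nth false w i.+1).
    rewrite orbF nth_set_nth /=.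
    have [->|ne2] := eqVneq k i; last by rewrite addbF.
    by rewrite addbT; case: (nth false w i) neq_i; case: (nth false w i.+1).
Qed.

Definition ops_support (os : seq op) : seq nat := flatten (map op_support os).

Lemma op_support_uniq (o : op) : uniq (op_support o).
Proof. by case: o => i //=; rewrite inE neq_ltn ltnSn. Qed.

Lemma apply_ops_flip (os : seq op) (u v : seq bool) : apply_ops os u = Some v ->
  [/\ size v = size u, {in ops_support os, forall k, k < size u} &
      forall k, nth false v k = nth false u k (+) odd (count_mem k (ops_support os))].
Proof.
elim: os u => [u [<-]|o os IH u] /=; first by split=> // k; rewrite addbF.
case def_w: (apply_op o u) => [w|] //= /IH[size_v lt_os nth_v].
have [size_w lt_o nth_w] := apply_op_flip def_w.
rewrite /ops_support /=; split=> [|k|k]; first by rewrite size_v.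
- by rewrite mem_cat => /orP[/lt_o // | /lt_os]; rewrite size_w.
- by rewrite nth_v nth_w count_cat oddD (count_uniq_mem _ (op_support_uniq o)) oddb addbA.
Qed.

Lemma transforms_uniq_flip (os : seq op) (u v : seq bool) :
  transforms os u v -> uniq (ops_support os) ->
  [/\ size v = size u, {in ops_support os, forall k, k < size u} &
      forall k, nth false v k = nth false u k (+) (k \in ops_support os)].
Proof.
move=> /apply_ops_flip[size_v lt_os nth_v] uniq_os; split=> // k.
by rewrite nth_v count_uniq_mem // oddb.
Qed.

Lemma apply_op_local (o : op) (w w' v : seq bool) : apply_op o w = Some v ->
  size w <= size w' -> {in op_support o, forall k, nth false w' k = nth false w k} ->
  exists v', apply_op o w' = Some v'.
Proof.
case: o => i /= + le_w eq_w.
- by case: ifP => // lt_i _; rewrite ifT; [by eexists | lia].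
- case: ifP => // /andP[lt_i1 neq_i] _.
  rewrite !eq_w ?inE ?eqxx ?orbT // neq_i ifT; [by eexists | lia].
Qed.

Lemma apply_op_prefix (o : op) (l : nat) (w v : seq bool) :
  apply_op o (take l w) = Some v -> exists v', apply_op o w = Some v'.
Proof.
move=> def_v; have [_ lt_o _] := apply_op_flip def_v.
apply: (apply_op_local def_v); first by rewrite size_take_min geq_minr.
by move=> k /lt_o; rewrite size_take_min leq_min => /andP[lt_kl _]; rewrite nth_take.
Qed.

Lemma apply_op_disjoint_skip (o1 o2 : op) (w v x : seq bool) :
  apply_op o1 w = Some v -> apply_op o2 v = Some x ->
  uniq (op_support o1 ++ op_support o2) -> exists y, apply_op o2 w = Some y.
Proof.
move=> def_v def_x; rewrite cat_uniq => /and3P[_ /hasPn disj _].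
have [size_v _ nth_v] := apply_op_flip def_v.
apply: (apply_op_local def_x); first by rewrite size_v.
by move=> k /disj /negbTE k_notin; rewrite nth_v k_notin addbF.
Qed.

Lemma op_pos_support (o : op) : op_pos o \in op_support o.
Proof. by case: o => i; rewrite /= inE eqxx. Qed.

Lemma op_support_ge (o : op) : {in op_support o, forall k, op_pos o <= k}.
Proof. by case: o => i k /=; rewrite !inE; [move/eqP-> | case/orP=> /eqP->]. Qed.

Lemma op_support_before (o1 o2 : op) :
  uniq (op_support o1 ++ op_support o2) -> op_pos o1 < op_pos o2 ->
  {in op_support o1, forall k, k < op_pos o2}.
Proof.
rewrite cat_uniq => /and3P[_ /hasPn disj _] lt_pos k.
have /disj pos2_notin := op_pos_support o2.
clear disj; case: o1 lt_pos pos2_notin => i /=; rewrite !inE => lt_pos.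
- by move=> _ /eqP->.
- by rewrite negb_or => /andP[ne_i ne_i1] /orP[] /eqP->; lia.
Qed.

Definition occurs_at (f u : seq bool) (p : nat) : Prop :=
  forall t, t < size f -> nth false f t = nth false u (p + t).

Lemma infix_occurs_at (f u : seq bool) :
  infix f u -> exists2 p, p + size f <= size u & occurs_at f u p.
Proof.
case/infixP=> [s [s' ->]]; exists (size s); first by rewrite !size_cat leq_add2l leq_addr.
by move=> t lt_t; rewrite nth_cat ltnNge leq_addr addKn /= nth_cat lt_t.
Qed.

Section ShiftedWordIsFree.

Variables (f w : seq bool) (r i j : nat) (Si Sj : seq nat).

Hypothesis j_lt : j < size f - r.
Hypothesis i_in : i \in Si.
Hypothesis j_in : j \in Sj.
Hypothesis Si_before : {in Si, forall k, k < j}.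
Hypothesis Sj_from : {in Sj, forall k, j <= k}.
Hypothesis overlap : forall t, t < size f - r ->
  nth false f (r + t) = nth false f t (+) ((t \in Si) || (t \in Sj)).
Hypothesis size_w : size w = size f.
Hypothesis nth_w : forall k, nth false w k = nth false f k (+) (k \in Si).

Let alpha := take r f ++ w.

Lemma notin_Si k : j <= k -> (k \in Si) = false.
Proof. by move=> le_jk; apply/negP => /Si_before; lia. Qed.

Lemma notin_Sj k : k < j -> (k \in Sj) = false.
Proof. by move=> lt_kj; apply/negP => /Sj_from; lia. Qed.

Lemma nth_alpha k : nth false alpha k =
  if k < r then nth false f k else nth false f (k - r) (+) (k - r \in Si).
Proof.
rewrite nth_cat size_takel; last by lia.
by case: ifP => lt_kr; rewrite ?nth_take ?nth_w.
Qed.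

(* At offset [r] the occurrence would be [w] itself, but [w] differs from
   [f] at position [i]. *)
Lemma not_occurs_at_shift : ~ occurs_at f alpha r.
Proof.
move=> occ; have lt_i : i < size f by have := Si_before i_in; lia.
have := occ i lt_i; rewrite nth_alpha ifF; last by lia.
by rewrite addKn i_in; case: (nth false f i).
Qed.

(* Before offset [r], comparing the symbols at [j] and [j + r] (and at
   [p + j - r] when [p + j] reaches into [w]) contradicts the error at [j]. *)
Lemma not_occurs_before_shift p : p < r -> ~ occurs_at f alpha p.
Proof.
move=> lt_pr occ.
have err_j : nth false f (r + j) = ~~ nth false f j.
  by rewrite overlap // notin_Si // j_in orbT addbT.
have at_jr : nth false f (r + j) = nth false f (p + j).
  rewrite addnC occ; last by lia.
  by rewrite nth_alpha ifF; [rewrite (_ : _ - r = p + j) ?notin_Si ?addbF | ]; lia.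
have := occ j ltac:(lia); rewrite nth_alpha.
case: ifP => lt_pjr at_j.
  by move: err_j; rewrite at_jr -at_j; case: (nth false f j).
have at_pj : nth false f (p + j) = nth false f (p + j - r) (+) (p + j - r \in Si).
  by rewrite -{1}(subnKC (_ : r <= p + j)) ?overlap ?notin_Sj ?orbF; lia.
by move: err_j; rewrite at_jr at_pj -at_j; case: (nth false f j).
Qed.

Theorem shifted_word_free : ffree f alpha.
Proof.
apply/negP => /infix_occurs_at[p le_p occ].
move: le_p; rewrite size_cat size_takel ?size_w; last by lia.
rewrite leq_add2r leq_eqVlt => /orP[/eqP eq_pr | lt_pr].
- by apply: not_occurs_at_shift; rewrite -eq_pr.
- exact: not_occurs_before_shift lt_pr occ.
Qed.

End ShiftedWordIsFree.

Theorem lemma3 (f : seq bool) (r : nat) (os : seq op) (Oi Oj : op) :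
  two_tilde_overlap f r ->
  minimal_tt os (pre (size f - r) f) (suf (size f - r) f) ->
  (os = [:: Oi; Oj] \/ os = [:: Oj; Oi]) ->
  op_pos Oi < op_pos Oj ->
  exists w, apply_op Oi f = Some w /\ ffree f (pre r f ++ w).
Proof.
move=> _ [tr_os [_ uniq_os]] def_os lt_ij; set l := size f - r in tr_os *.
have [_ lt_os flip_os] := transforms_uniq_flip tr_os uniq_os.
have mem_os t : (t \in ops_support os) = (t \in op_support Oi) || (t \in op_support Oj).
  by case: def_os => ->; rewrite /ops_support /= cats0 mem_cat // orbC.
have uniq_ij : uniq (op_support Oi ++ op_support Oj).
  by case: def_os uniq_os => ->; rewrite /ops_support /= cats0 // uniq_catC.
(* [Oi] is defined on pre_l(f) (possibly after [Oj]), hence on [f] *)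
have [v def_v] : exists v, apply_op Oi (pre l f) = Some v.
  case: def_os tr_os => -> /=; rewrite /transforms /=.
  - by case: (apply_op Oi (pre l f)) => [a|] // _; exists a.
  - case def_a: (apply_op Oj (pre l f)) => [a|] //=.
    case def_b: (apply_op Oi a) => [b|] //= _.
    by apply: (apply_op_disjoint_skip def_a def_b); rewrite uniq_catC.
have [w def_w] := apply_op_prefix def_v.
have [size_w _ nth_w] := apply_op_flip def_w.
have lt_jl : op_pos Oj < l.
  by rewrite -[l](size_takel (leq_subr r _)) lt_os // mem_os op_pos_support orbT.
exists w; split=> //.
apply: (shifted_word_free (i := op_pos Oi) (j := op_pos Oj)) => //.
- exact: op_pos_support.
- exact: op_pos_support.
- exact: op_support_before.
- exact: op_support_ge.
- move=> t lt_tl; have := flip_os t; rewrite -mem_os /suf /pre nth_take // nth_drop.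
  by rewrite (_ : size f - l = r) //; lia.
Qed.
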